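(* Let $\mathcal D$ be a monoidal category and $(C,\sigma)$ a cotensorable cocommutative lax central coalgebra of $\mathcal D$. Then the comonoidal adjunction $(V\colon{}^C_\sigma\mathrm{Comod}\to\mathcal D,\ R\colon\mathcal D\to{}^C_\sigma\mathrm{Comod})$ is a left Hopf adjunction, and its induced lax central coalgebra (as in: $F(\mathbb 1)$ with half-braiding $\mathbb H^r_{-,\mathbb 1}(\mathbb H^l_{\mathbb 1,-})^{-1}$) is $(C,\sigma)$. If moreover $\sigma$ is invertible, $(V,R)$ is a Hopf adjunction.
   Context: Monoidal categories are strict. A lax half-braiding for $C$ is a natural transformation $\sigma_X\colon C\otimes X\to X\otimes C$ with $\sigma_{Y\otimes Z}=(Y\otimes\sigma_Z)(\sigma_Y\otimes Z)$, $\sigma_{\mathbb 1}=\mathrm{id}$. A lax central coalgebra $(C,\sigma)$ is a coalgebra $(C,\Delta,\varepsilon)$ in the lax center of $\mathcal D$ (i.e. $\Delta,\varepsilon$ are morphisms of lax half-braidings, where $(C,\sigma)\otimes(C,\sigma)$ has half-braiding $(\sigma\otimes C)(C\otimes\sigma)$); it is cocommutative if $\sigma_C\Delta=\Delta$. It is cotensorable if for any left $C$-comodules $(M,\delta)$, $(N,\delta')$ in $\mathcal D$ the coreflexive pair $\sigma_M\delta\otimes N,\ M\otimes\delta'\colon M\otimes N\rightrightarrows M\otimes C\otimes N$ has an equalizer $M\square^\sigma_C N\to M\otimes N$, preserved by $C\otimes ?$. Then $M\square^\sigma_C N$ carries a unique left coaction making the equalizer map a comodule map into $(M\otimes N,\delta\otimes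 N)$, and ${}^C_\sigma\mathrm{Comod}$ denotes the monoidal category of left $C$-comodules with product $\square^\sigma_C$ and unit $(C,\Delta)$. $V$ is the forgetful functor and $R(X)=(C\otimes X,\Delta\otimes X)$ the cofree comodule functor, which is strong monoidal, making $(V,R)$ a comonoidal adjunction (with comonad $C\otimes ?$). For a comonoidal adjunction $(F,U)$ (unit $\eta$, counit $\varepsilon$, $F_2(X,Y)\colon F(X\otimes Y)\to FX\otimes FY$), the Hopf operators are $\mathbb H^l_{c,d}=(Fc\otimes\varepsilon_d)F_2(c,Ud)$ and $\mathbb H^r_{d,c}=(\varepsilon_d\otimes Fc)F_2(Ud,c)$; it is a left Hopf adjunction if $\mathbb H^l$ is invertible, a Hopf adjunction if both are. *)

Record MonData := {
  ob : Type;
  hom : ob -> ob -> Type;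
  idm : forall a, hom a a;
  comp : forall a b c, hom b c -> hom a b -> hom a c;
  tens : ob -> ob -> ob;
  tensm : forall a b c d, hom a b -> hom c d -> hom (tens a c) (tens b d);
  unit : ob }.

Arguments hom {m} _ _.
Arguments idm {m} a.
Arguments comp {m a b c} _ _.
Arguments tens {m} _ _.
Arguments tensm {m a b c d} _ _.
Arguments unit {m}.

Notation "g ∘ f" := (comp g f) (at level 40, left associativity).
Notation "a ⊗ b" := (tens a b) (at level 30, right associativity).
Notation "f ⊗m g" := (tensm f g) (at level 30, right associativity).

Definition cast {D : MonData} {a b : ob D} (e : a = b) : hom a b :=
  eq_rect a (hom a) (idm a) b e.

Record isStrictMon (D : MonData) : Prop := {
  comp_idl : forall (a b : ob D) (f : hom a b), idm b ∘ f = f;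
  comp_idr : forall (a b : ob D) (f : hom a b), f ∘ idm a = f;
  comp_assoc : forall (a b c d : ob D) (f : hom a b) (g : hom b c) (h : hom c d),
      h ∘ (g ∘ f) = (h ∘ g) ∘ f;
  tensm_id : forall a b : ob D, idm a ⊗m idm b = idm (a ⊗ b);
  tensm_comp : forall (a b c a' b' c' : ob D) (f : hom a b) (g : hom b c)
      (f' : hom a' b') (g' : hom b' c'),
      (g ∘ f) ⊗m (g' ∘ f') = (g ⊗m g') ∘ (f ⊗m f');
  tens_assoc : forall a b c : ob D, (a ⊗ b) ⊗ c = a ⊗ (b ⊗ c);
  tens_unitl : forall a : ob D, unit ⊗ a = a;
  tens_unitr : forall a : ob D, a ⊗ unit = a;
  tensm_assoc : forall (a b c a' b' c' : ob D) (f : hom a a') (g : hom b b')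
      (h : hom c c'),
      cast (tens_assoc a' b' c') ∘ ((f ⊗m g) ⊗m h)
      = (f ⊗m (g ⊗m h)) ∘ cast (tens_assoc a b c);
  tensm_unitl : forall (a b : ob D) (f : hom a b),
      cast (tens_unitl b) ∘ (idm unit ⊗m f) = f ∘ cast (tens_unitl a);
  tensm_unitr : forall (a b : ob D) (f : hom a b),
      cast (tens_unitr b) ∘ (f ⊗m idm unit) = f ∘ cast (tens_unitr a) }.

Section Defs.
Context {D : MonData} (HD : isStrictMon D).

Definition is_iso {a b : ob D} (f : hom a b) : Prop :=
  exists g : hom b a, g ∘ f = idm a /\ f ∘ g = idm b.

Definition is_equalizer {E A B : ob D} (f g : hom A B) (e : hom E A) : Prop :=
  f ∘ e = g ∘ e /\
  forall (Z : ob D) (h : hom Z A), f ∘ h = g ∘ h ->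
    exists u : hom Z E, e ∘ u = h /\ forall u' : hom Z E, e ∘ u' = h -> u' = u.

Let A := tens_assoc D HD.
Let UL := tens_unitl D HD.
Let UR := tens_unitr D HD.

Variable C : ob D.

Definition is_lax_half_braiding (sigma : forall X : ob D, hom (C ⊗ X) (X ⊗ C)) : Prop :=
  (forall (X Y : ob D) (f : hom X Y), (f ⊗m idm C) ∘ sigma X = sigma Y ∘ (idm C ⊗m f)) /\
  (forall Y Z : ob D,
     sigma (Y ⊗ Z) = cast (eq_sym (A Y Z C)) ∘ (idm Y ⊗m sigma Z) ∘ cast (A Y C Z)
                     ∘ (sigma Y ⊗m idm Z) ∘ cast (eq_sym (A C Y Z))) /\
  sigma unit = cast (eq_trans (UR C) (eq_sym (UL C))).

Definition is_coalgebra (Delta : hom C (C ⊗ C)) (eps : hom C unit) : Prop :=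
  cast (A C C C) ∘ (Delta ⊗m idm C) ∘ Delta = (idm C ⊗m Delta) ∘ Delta /\
  cast (UL C) ∘ (eps ⊗m idm C) ∘ Delta = idm C /\
  cast (UR C) ∘ (idm C ⊗m eps) ∘ Delta = idm C.

(* coalgebra in the lax center: Delta and eps are morphisms of lax half-braidings,
   (C,sigma)(x)(C,sigma) carrying (sigma (x) C)(C (x) sigma), the unit carrying id. *)
Definition is_lax_central_coalgebra (Delta : hom C (C ⊗ C)) (eps : hom C unit)
    (sigma : forall X : ob D, hom (C ⊗ X) (X ⊗ C)) : Prop :=
  is_lax_half_braiding sigma /\ is_coalgebra Delta eps /\
  (forall X : ob D,
     cast (A X C C) ∘ (sigma X ⊗m idm C) ∘ cast (eq_sym (A C X C)) ∘ (idm C ⊗m sigma X)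
       ∘ cast (A C C X) ∘ (Delta ⊗m idm X)
     = (idm X ⊗m Delta) ∘ sigma X) /\
  (forall X : ob D,
     (idm X ⊗m eps) ∘ sigma X = cast (eq_trans (UL X) (eq_sym (UR X))) ∘ (eps ⊗m idm X)).

Definition is_cocommutative (Delta : hom C (C ⊗ C))
    (sigma : forall X : ob D, hom (C ⊗ X) (X ⊗ C)) : Prop :=
  sigma C ∘ Delta = Delta.

Definition is_comodule (Delta : hom C (C ⊗ C)) (eps : hom C unit)
    (M : ob D) (delta : hom M (C ⊗ M)) : Prop :=
  cast (A C C M) ∘ (Delta ⊗m idm M) ∘ delta = (idm C ⊗m delta) ∘ delta /\
  cast (UL M) ∘ (eps ⊗m idm M) ∘ delta = idm M.

Definition cot1 (sigma : forall X : ob D, hom (C ⊗ X) (X ⊗ C))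
    (M : ob D) (delta : hom M (C ⊗ M)) (N : ob D) : hom (M ⊗ N) (M ⊗ (C ⊗ N)) :=
  cast (A M C N) ∘ ((sigma M ∘ delta) ⊗m idm N).

Definition cot2 (M N : ob D) (delta' : hom N (C ⊗ N)) : hom (M ⊗ N) (M ⊗ (C ⊗ N)) :=
  idm M ⊗m delta'.

Definition cotensorable (Delta : hom C (C ⊗ C)) (eps : hom C unit)
    (sigma : forall X : ob D, hom (C ⊗ X) (X ⊗ C)) : Prop :=
  forall (M : ob D) (delta : hom M (C ⊗ M)) (N : ob D) (delta' : hom N (C ⊗ N)),
    is_comodule Delta eps M delta -> is_comodule Delta eps N delta' ->
    exists (E : ob D) (e : hom E (M ⊗ N)),
      is_equalizer (cot1 sigma M delta N) (cot2 M N delta') e /\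
      is_equalizer (idm C ⊗m cot1 sigma M delta N) (idm C ⊗m cot2 M N delta')
                   (idm C ⊗m e).

(* coaction of the cofree comodule R X = (C (x) X, Delta (x) X) *)
Definition cofree_coaction (Delta : hom C (C ⊗ C)) (X : ob D) : hom (C ⊗ X) (C ⊗ (C ⊗ X)) :=
  cast (A C C X) ∘ (Delta ⊗m idm X).

Definition adj_counit (eps : hom C unit) (X : ob D) : hom (C ⊗ X) X :=
  cast (UL X) ∘ (eps ⊗m idm X).

(* Hopf operators of (V,R); e is the structure map V_2(M, R X) (resp. V_2(R X, M)),
   i.e. the equalizer inclusion V(M □ R X) -> M (x) (C (x) X). *)
Definition hopfL (eps : hom C unit) {M X E : ob D} (e : hom E (M ⊗ (C ⊗ X))) : hom E (M ⊗ X) :=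
  (idm M ⊗m adj_counit eps X) ∘ e.

Definition hopfR (eps : hom C unit) {X M E : ob D} (e : hom E ((C ⊗ X) ⊗ M)) : hom E (X ⊗ M) :=
  (adj_counit eps X ⊗m idm M) ∘ e.

Definition VR_left_hopf (Delta : hom C (C ⊗ C)) (eps : hom C unit)
    (sigma : forall X : ob D, hom (C ⊗ X) (X ⊗ C)) : Prop :=
  forall (M : ob D) (delta : hom M (C ⊗ M)), is_comodule Delta eps M delta ->
  forall (X E : ob D) (e : hom E (M ⊗ (C ⊗ X))),
    is_equalizer (cot1 sigma M delta (C ⊗ X)) (cot2 M (C ⊗ X) (cofree_coaction Delta X)) e ->
    is_iso (hopfL eps e).

Definition VR_right_hopf (Delta : hom C (C ⊗ C)) (eps : hom C unit)
    (sigma : forall X : ob D, hom (C ⊗ X) (X ⊗ C)) : Prop :=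
  forall (M : ob D) (delta : hom M (C ⊗ M)), is_comodule Delta eps M delta ->
  forall (X E : ob D) (e : hom E ((C ⊗ X) ⊗ M)),
    is_equalizer (cot1 sigma (C ⊗ X) (cofree_coaction Delta X) M) (cot2 (C ⊗ X) M delta) e ->
    is_iso (hopfR eps e).

Definition VR_hopf Delta eps sigma : Prop :=
  VR_left_hopf Delta eps sigma /\ VR_right_hopf Delta eps sigma.

(* Induced lax central coalgebra on F(1) = V(C,Delta) = C.
   Comultiplication: V_2(1,1) o V(l_1)^{-1}, counit V_0 = eps (by definition of
   the comonoidal structure of V). Half-braiding:
   H^r_{X,1} o V(r_{RX})^{-1} o V(l_{RX}) o (H^l_{1,X})^{-1},
   where l, r are the unitors of the comodule category, V l = (eps (x) N) o e,
   V r = (M (x) eps) o e. *)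
Definition induced_comultiplication_is (Delta : hom C (C ⊗ C)) (eps : hom C unit)
    (sigma : forall X : ob D, hom (C ⊗ X) (X ⊗ C)) : Prop :=
  forall (E0 : ob D) (e0 : hom E0 (C ⊗ C)),
    is_equalizer (cot1 sigma C Delta C) (cot2 C C Delta) e0 ->
    exists k : hom C E0,
      k ∘ (cast (UL C) ∘ (eps ⊗m idm C) ∘ e0) = idm E0 /\
      (cast (UL C) ∘ (eps ⊗m idm C) ∘ e0) ∘ k = idm C /\
      e0 ∘ k = Delta.

Definition induced_half_braiding_is (Delta : hom C (C ⊗ C)) (eps : hom C unit)
    (sigma : forall X : ob D, hom (C ⊗ X) (X ⊗ C)) : Prop :=
  forall (X E1 E2 : ob D) (e1 : hom E1 (C ⊗ (C ⊗ X))) (e2 : hom E2 ((C ⊗ X) ⊗ C)),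
    is_equalizer (cot1 sigma C Delta (C ⊗ X)) (cot2 C (C ⊗ X) (cofree_coaction Delta X)) e1 ->
    is_equalizer (cot1 sigma (C ⊗ X) (cofree_coaction Delta X) C) (cot2 (C ⊗ X) C Delta) e2 ->
    let Hl := hopfL eps e1 in
    let Hr := hopfR eps e2 in
    let Vl := cast (UL (C ⊗ X)) ∘ (eps ⊗m idm (C ⊗ X)) ∘ e1 in
    let Vr := cast (UR (C ⊗ X)) ∘ (idm (C ⊗ X) ⊗m eps) ∘ e2 in
    exists (g : hom (C ⊗ X) E1) (h : hom (C ⊗ X) E2),
      g ∘ Hl = idm E1 /\ Hl ∘ g = idm (C ⊗ X) /\
      h ∘ Vr = idm E2 /\ Vr ∘ h = idm (C ⊗ X) /\
      Hr ∘ h ∘ Vl ∘ g = sigma X.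
End Defs.

From Stdlib Require Import ProofIrrelevance ClassicalEpsilon Eqdep.

(* For a left comodule (M, d), centrality and cocommutativity of Delta make
   rho := sigma_M d a right C-coaction on M, and M □ N is the equalizer of
   rho (x) N and M (x) d'.  When N = C (x) X is cofree this equalizer is split:
   rho (x) X equalizes the pair and M (x) eps (x) X is a retraction of it, and
   the composite of the retraction with the equalizer is exactly H^l.  The same
   splitting, for X = 1 and for the comodule (C, Delta), gives the unitors of
   the comodule category, from which the induced comultiplication is Delta and,
   since (eps (x) X (x) C) sigma_(C (x) X) (Delta (x) X) = sigma_X, the induced
   half-braiding is sigma.  If tau inverts sigma_X, then
   (tau (x) M)(X (x) d) splits the equalizer defining H^r in the same way. *)

Section Equalizers.
Context {D : MonData} (HD : isStrictMon D).

Lemma equalizer_retract_iso {E A B Z : ob D} (f g : hom A B) (e : hom E A)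
    (s : hom Z A) (p : hom A Z) :
  is_equalizer f g e -> f ∘ s = g ∘ s -> p ∘ s = idm Z -> s ∘ (p ∘ e) = e ->
  exists u : hom Z E, e ∘ u = s /\ u ∘ (p ∘ e) = idm E /\ (p ∘ e) ∘ u = idm Z.
Proof.
  intros [He univ] Hs Hps Hspe.
  destruct (univ Z s Hs) as [u [Hu _]].
  exists u; split; [exact Hu|split].
  - destruct (univ E e He) as [v [_ Hv]].
    rewrite (Hv (idm E)) by apply (comp_idr D HD).
    apply Hv. rewrite (comp_assoc D HD), Hu. exact Hspe.
  - rewrite <- (comp_assoc D HD), Hu. exact Hps.
Qed.

Corollary equalizer_retract_is_iso {E A B Z : ob D} (f g : hom A B) (e : hom E A)
    (s : hom Z A) (p : hom A Z) :
  is_equalizer f g e -> f ∘ s = g ∘ s -> p ∘ s = idm Z -> s ∘ (p ∘ e) = e ->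
  is_iso (p ∘ e).
Proof.
  intros He Hs Hps Hspe.
  destruct (equalizer_retract_iso f g e s p He Hs Hps Hspe) as [u [_ Hu]].
  exists u. exact Hu.
Qed.

End Equalizers.

Section Arrows.
Context {D : MonData} (HD : isStrictMon D).

(* Morphisms packed with their endpoints: the strictness equalities
   [tens_assoc], [tens_unitl], [tens_unitr] between objects then become
   invisible, and equations hold on the nose instead of up to [cast]. *)
Definition Arr := {p : ob D * ob D & hom (fst p) (snd p)}.
Definition pack {a b : ob D} (f : hom a b) : Arr :=
  existT (fun p => hom (fst p) (snd p)) (a, b) f.
Definition dom (F : Arr) : ob D := fst (projT1 F).
Definition cod (F : Arr) : ob D := snd (projT1 F).
Definition mor (F : Arr) : hom (dom F) (cod F) := projT2 F.
Definition Aid (a : ob D) : Arr := pack (idm a).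
Definition Atens (F G : Arr) : Arr := pack (mor F ⊗m mor G).
(* Composition of non-composable arrows returns [F]; all lemmas below carry
   the side condition [cod F = dom G]. *)
Definition Acomp (G F : Arr) : Arr :=
  match excluded_middle_informative (cod F = dom G) with
  | left e => pack (mor G ∘ cast e ∘ mor F)
  | right _ => F
  end.

Lemma pack_ind (P : Arr -> Prop) :
  (forall a b (f : hom a b), P (pack f)) -> forall F, P F.
Proof. intros HP [[a b] f]. exact (HP a b f). Qed.

Lemma pack_inj {a b} (f g : hom a b) : pack f = pack g -> f = g.
Proof. exact (Eqdep.EqdepTheory.inj_pair2 _ _ _ _ _). Qed.

Lemma pack_id a : pack (idm a) = Aid a.
Proof. reflexivity. Qed.

Lemma pack_tens {a b c d} (f : hom a b) (g : hom c d) :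
  pack (f ⊗m g) = Atens (pack f) (pack g).
Proof. reflexivity. Qed.

Lemma pack_cast {a b} (e : a = b) : pack (cast e) = Aid a.
Proof. destruct e. reflexivity. Qed.

Lemma pack_comp {a b c} (g : hom b c) (f : hom a b) : pack (g ∘ f) = Acomp (pack g) (pack f).
Proof.
  unfold Acomp. destruct (excluded_middle_informative _) as [e|n]; [|now exfalso].
  cbn in e. rewrite (proof_irrelevance _ e eq_refl). cbn.
  rewrite (comp_idr D HD). reflexivity.
Qed.

Lemma pack_eq_cast {a b a' b'} (f : hom a b) (g : hom a' b') (e1 : a = a') (e2 : b = b') :
  cast e2 ∘ f = g ∘ cast e1 -> pack f = pack g.
Proof.
  destruct e1, e2. cbn. rewrite (comp_idl D HD), (comp_idr D HD). intros ->. reflexivity.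
Qed.

Lemma Atens_id a b : Atens (Aid a) (Aid b) = Aid (a ⊗ b).
Proof. unfold Atens, Aid. cbn. rewrite (tensm_id D HD). reflexivity. Qed.

Lemma Atens_assoc F G H : Atens (Atens F G) H = Atens F (Atens G H).
Proof. eapply pack_eq_cast. apply (tensm_assoc D HD). Qed.

Lemma Atens_unitl F : Atens (Aid unit) F = F.
Proof.
  induction F as [a b f] using pack_ind.
  eapply pack_eq_cast. apply (tensm_unitl D HD).
Qed.

Lemma Atens_unitr F : Atens F (Aid unit) = F.
Proof.
  induction F as [a b f] using pack_ind.
  eapply pack_eq_cast. apply (tensm_unitr D HD).
Qed.

Lemma dom_Acomp G F : dom (Acomp G F) = dom F.
Proof. unfold Acomp. destruct (excluded_middle_informative _); reflexivity. Qed.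

Lemma cod_Acomp G F : cod F = dom G -> cod (Acomp G F) = cod G.
Proof. unfold Acomp. destruct (excluded_middle_informative _); [reflexivity|contradiction]. Qed.

Lemma Acomp_idl a F : cod F = a -> Acomp (Aid a) F = F.
Proof.
  induction F as [x y f] using pack_ind. cbn. intros <-. unfold Aid.
  rewrite <- (pack_comp (idm y) f), (comp_idl D HD). reflexivity.
Qed.

Lemma Acomp_idr a F : dom F = a -> Acomp F (Aid a) = F.
Proof.
  induction F as [x y f] using pack_ind. cbn. intros <-. unfold Aid.
  rewrite <- (pack_comp f (idm x)), (comp_idr D HD). reflexivity.
Qed.

Lemma Acomp_assoc F G H : cod F = dom G -> cod G = dom H ->
  Acomp H (Acomp G F) = Acomp (Acomp H G) F.
Proof.
  induction F as [x y f] using pack_ind; induction G as [y' z g] using pack_ind;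
  induction H as [z' w h] using pack_ind; cbn; intros <- <-.
  rewrite <- !pack_comp, (comp_assoc D HD). reflexivity.
Qed.

Lemma Atens_comp F G F' G' : cod F = dom G -> cod F' = dom G' ->
  Atens (Acomp G F) (Acomp G' F') = Acomp (Atens G G') (Atens F F').
Proof.
  induction F as [x y f] using pack_ind; induction G as [y' z g] using pack_ind;
  induction F' as [x2 y2 f'] using pack_ind; induction G' as [y2' z2 g'] using pack_ind;
  cbn; intros <- <-.
  rewrite <- !pack_comp. unfold Atens. cbn. rewrite <- pack_comp, (tensm_comp D HD).
  reflexivity.
Qed.

Lemma Atens_compl F G c : cod F = dom G ->
  Atens (Acomp G F) (Aid c) = Acomp (Atens G (Aid c)) (Atens F (Aid c)).
Proof.
  intro H. rewrite <- Atens_comp by (try assumption; reflexivity).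
  rewrite Acomp_idl by reflexivity. reflexivity.
Qed.

Lemma Atens_compr F G c : cod F = dom G ->
  Atens (Aid c) (Acomp G F) = Acomp (Atens (Aid c) G) (Atens (Aid c) F).
Proof.
  intro H. rewrite <- Atens_comp by (try assumption; reflexivity).
  rewrite Acomp_idl by reflexivity. reflexivity.
Qed.

Lemma Atens_split_lr F G : Atens F G = Acomp (Atens F (Aid (cod G))) (Atens (Aid (dom F)) G).
Proof.
  rewrite <- Atens_comp by reflexivity.
  rewrite Acomp_idl, Acomp_idr by reflexivity. reflexivity.
Qed.

Lemma Atens_split_rl F G : Atens F G = Acomp (Atens (Aid (cod F)) G) (Atens F (Aid (dom G))).
Proof.
  rewrite <- Atens_comp by reflexivity.
  rewrite Acomp_idl, Acomp_idr by reflexivity. reflexivity.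
Qed.

End Arrows.

Section LaxCentralCoalgebra.
Context {D : MonData} (HD : isStrictMon D).

Ltac simpl_ends := cbn [dom cod Atens Aid pack mor projT1 fst snd].

Ltac solve_ob :=
  repeat (simpl_ends; first [rewrite dom_Acomp | rewrite cod_Acomp by solve_ob]);
  simpl_ends;
  repeat (first [rewrite (tens_assoc _ HD) | rewrite (tens_unitl _ HD)
                | rewrite (tens_unitr _ HD)]);
  reflexivity.

Ltac nest_right := repeat (rewrite <- (Acomp_assoc HD) by solve_ob).

Ltac arrow_simpl :=
  repeat (first [rewrite (pack_comp HD) | rewrite pack_tens | rewrite pack_cast
                | rewrite pack_id]);
  repeat (first [rewrite (Atens_id HD) | rewrite (Acomp_idl HD) by solve_ob
                | rewrite (Acomp_idr HD) by solve_ob | rewrite (Atens_unitl HD)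
                | rewrite (Atens_unitr HD)]);
  nest_right.

Context (C : ob D) (Delta : hom C (C ⊗ C)) (eps : hom C unit)
    (sigma : forall X : ob D, hom (C ⊗ X) (X ⊗ C)).
Context (Hlcc : is_lax_central_coalgebra HD C Delta eps sigma)
        (Hcocomm : is_cocommutative C Delta sigma).

Notation S X := (pack (sigma X)).
Notation Dl := (pack Delta).
Notation Ep := (pack eps).
Notation I := Aid.

Ltac from_hom H := generalize (f_equal pack H); arrow_simpl; auto.

Lemma sigma_natural X Y (f : hom X Y) :
  Acomp (Atens (pack f) (I C)) (S X) = Acomp (S Y) (Atens (I C) (pack f)).
Proof. destruct Hlcc as [[H _] _]. from_hom (H X Y f). Qed.

Lemma sigma_tens Y Z : S (Y ⊗ Z) = Acomp (Atens (I Y) (S Z)) (Atens (S Y) (I Z)).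
Proof. destruct Hlcc as [[_ [H _]] _]. rewrite H. arrow_simpl. reflexivity. Qed.

Lemma Delta_coassoc : Acomp (Atens Dl (I C)) Dl = Acomp (Atens (I C) Dl) Dl.
Proof. destruct Hlcc as [_ [[H _] _]]. from_hom H. Qed.

Lemma Delta_counitl : Acomp (Atens Ep (I C)) Dl = I C.
Proof. destruct Hlcc as [_ [[_ [H _]] _]]. from_hom H. Qed.

Lemma Delta_counitr : Acomp (Atens (I C) Ep) Dl = I C.
Proof. destruct Hlcc as [_ [[_ [_ H]] _]]. from_hom H. Qed.

Lemma Delta_central X :
  Acomp (Atens (S X) (I C)) (Acomp (Atens (I C) (S X)) (Atens Dl (I X)))
  = Acomp (Atens (I X) Dl) (S X).
Proof. destruct Hlcc as [_ [_ [H _]]]. from_hom (H X). Qed.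

Lemma eps_central X : Acomp (Atens (I X) Ep) (S X) = Atens Ep (I X).
Proof. destruct Hlcc as [_ [_ [_ H]]]. from_hom (H X). Qed.

Lemma Delta_cocomm : Acomp (S C) Dl = Dl.
Proof. from_hom Hcocomm. Qed.

Section Comodule.
Variables (M : ob D) (d : hom M (C ⊗ M)).
Hypothesis Hd : is_comodule HD C Delta eps M d.

Lemma coaction_coassoc :
  Acomp (Atens Dl (I M)) (pack d) = Acomp (Atens (I C) (pack d)) (pack d).
Proof. destruct Hd as [H _]. from_hom H. Qed.

Lemma coaction_counit : Acomp (Atens Ep (I M)) (pack d) = I M.
Proof. destruct Hd as [_ H]. from_hom H. Qed.

Local Notation rho := (Acomp (S M) (pack d)).

Lemma twisted_coaction_coassoc :
  Acomp (Atens rho (I C)) rho = Acomp (Atens (I M) Dl) rho.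
Proof.
  rewrite (Atens_compl HD) by solve_ob. nest_right.
  rewrite (Acomp_assoc HD (pack d) (S M) (Atens (pack d) (I C))) by solve_ob.
  rewrite sigma_natural, sigma_tens. nest_right.
  rewrite <- coaction_coassoc.
  rewrite (Acomp_assoc HD _ (Atens Dl (I M)) (Atens (S C) (I M))) by solve_ob.
  rewrite <- (Atens_compl HD) by solve_ob. rewrite Delta_cocomm.
  rewrite (Acomp_assoc HD (pack d) (S M) (Atens (I M) Dl)) by solve_ob.
  rewrite <- Delta_central. nest_right. reflexivity.
Qed.

Lemma twisted_coaction_counit : Acomp (Atens (I M) Ep) rho = I M.
Proof. rewrite (Acomp_assoc HD) by solve_ob. rewrite eps_central. apply coaction_counit. Qed.

Lemma cotensor_cofree_iso X E (e : hom E (M ⊗ (C ⊗ X))) :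
  is_equalizer (cot1 HD C sigma M d (C ⊗ X))
               (cot2 C M (C ⊗ X) (cofree_coaction HD C Delta X)) e ->
  exists u, e ∘ u = cast (tens_assoc D HD M C X) ∘ ((sigma M ∘ d) ⊗m idm X) /\
            u ∘ hopfL HD C eps e = idm E /\ hopfL HD C eps e ∘ u = idm (M ⊗ X).
Proof.
  intros He. unfold hopfL. apply (equalizer_retract_iso HD _ _ _ _ _ He).
  - apply pack_inj. unfold cot1, cot2, cofree_coaction. arrow_simpl.
    rewrite <- (Atens_id HD C X), <- (Atens_assoc HD rho (I C) (I X)).
    rewrite <- (Atens_compl HD) by solve_ob.
    rewrite twisted_coaction_coassoc, (Atens_compl HD) by solve_ob.
    rewrite (Atens_assoc HD). reflexivity.
  - apply pack_inj. unfold adj_counit. arrow_simpl.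
    rewrite <- (Atens_assoc HD (I M) Ep (I X)), <- (Atens_compl HD) by solve_ob.
    rewrite twisted_coaction_counit. arrow_simpl. reflexivity.
  - (* Whisker the equalizing equation with M (x) C (x) eps (x) X. *)
    destruct He as [Heq _].
    assert (H1 := f_equal pack Heq). revert H1.
    unfold cot1, cot2, cofree_coaction. arrow_simpl. intro H1.
    apply pack_inj. unfold adj_counit. arrow_simpl.
    rewrite (Acomp_assoc HD) by solve_ob. rewrite <- (Atens_comp HD) by solve_ob. arrow_simpl.
    replace (Atens rho (Atens Ep (I X))) with
      (Acomp (Atens (I (M ⊗ C)) (Atens Ep (I X))) (Atens rho (I (C ⊗ X)))).
    2:{ rewrite <- (Atens_comp HD) by solve_ob. arrow_simpl. reflexivity. }
    nest_right. rewrite H1. rewrite (Acomp_assoc HD) by solve_ob.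
    rewrite <- (Atens_id HD M C), (Atens_assoc HD (I M) (I C)).
    rewrite <- (Atens_comp HD) by solve_ob. arrow_simpl.
    rewrite <- (Atens_assoc HD (I C) Ep (I X)).
    rewrite <- (Atens_compl HD) by solve_ob. rewrite Delta_counitr. arrow_simpl. reflexivity.
Qed.

Lemma cotensor_unit_l_iso E (e : hom E (C ⊗ M)) :
  is_equalizer (cot1 HD C sigma C Delta M) (cot2 C C M d) e ->
  exists u, e ∘ u = d /\
            u ∘ (cast (tens_unitl D HD M) ∘ (eps ⊗m idm M) ∘ e) = idm E /\
            (cast (tens_unitl D HD M) ∘ (eps ⊗m idm M) ∘ e) ∘ u = idm M.
Proof.
  intros He. apply (equalizer_retract_iso HD _ _ _ _ _ He).
  - apply pack_inj. unfold cot1, cot2. arrow_simpl.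
    rewrite Delta_cocomm. apply coaction_coassoc.
  - apply pack_inj. arrow_simpl. apply coaction_counit.
  - destruct He as [Heq _].
    assert (H1 := f_equal pack Heq). revert H1. unfold cot1, cot2. arrow_simpl.
    rewrite Delta_cocomm. intro H1.
    apply pack_inj. arrow_simpl.
    rewrite (Acomp_assoc HD _ _ (pack d)) by solve_ob.
    replace (Acomp (pack d) (Atens Ep (I M))) with (Atens Ep (pack d)).
    2:{ rewrite (Atens_split_rl HD Ep (pack d)). simpl_ends.
        rewrite (Atens_unitl HD). reflexivity. }
    rewrite (Atens_split_lr HD Ep (pack d)). simpl_ends. nest_right.
    rewrite <- H1. rewrite (Acomp_assoc HD) by solve_ob.
    rewrite <- (Atens_id HD C M), <- (Atens_assoc HD).
    rewrite <- (Atens_compl HD) by solve_ob. rewrite Delta_counitl. arrow_simpl. reflexivity.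
Qed.

Lemma cotensor_unit_r_iso E (e : hom E (M ⊗ C)) :
  is_equalizer (cot1 HD C sigma M d C) (cot2 C M C Delta) e ->
  exists u, e ∘ u = sigma M ∘ d /\
            u ∘ (cast (tens_unitr D HD M) ∘ (idm M ⊗m eps) ∘ e) = idm E /\
            (cast (tens_unitr D HD M) ∘ (idm M ⊗m eps) ∘ e) ∘ u = idm M.
Proof.
  intros He. apply (equalizer_retract_iso HD _ _ _ _ _ He).
  - apply pack_inj. unfold cot1, cot2. arrow_simpl. apply twisted_coaction_coassoc.
  - apply pack_inj. arrow_simpl. apply twisted_coaction_counit.
  - destruct He as [Heq _].
    assert (H1 := f_equal pack Heq). revert H1. unfold cot1, cot2. arrow_simpl. intro H1.
    apply pack_inj. arrow_simpl.
    set (R := rho) in *.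
    rewrite (Acomp_assoc HD _ (pack d) (S M)) by solve_ob. fold R.
    rewrite (Acomp_assoc HD (pack e) _ R) by (subst R; solve_ob).
    replace (Acomp R (Atens (I M) Ep)) with (Acomp (Atens (I (M ⊗ C)) Ep) (Atens R (I C))).
    2:{ rewrite <- (Atens_comp HD) by (subst R; solve_ob).
        rewrite (Acomp_idr HD), (Acomp_idl HD) by (subst R; solve_ob).
        rewrite (Atens_split_lr HD R Ep). simpl_ends.
        rewrite (Atens_unitr HD). subst R. rewrite dom_Acomp. reflexivity. }
    rewrite <- (Acomp_assoc HD) by (subst R; solve_ob).
    rewrite H1, (Acomp_assoc HD) by solve_ob.
    rewrite <- (Atens_id HD M C), (Atens_assoc HD (I M) (I C) Ep).
    rewrite <- (Atens_compr HD) by solve_ob. rewrite Delta_counitr. arrow_simpl. reflexivity.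
Qed.

End Comodule.

Lemma comodule_regular : is_comodule HD C Delta eps C Delta.
Proof. destruct Hlcc as [_ [[H1 [H2 _]] _]]. split; assumption. Qed.

Lemma comodule_cofree X : is_comodule HD C Delta eps (C ⊗ X) (cofree_coaction HD C Delta X).
Proof.
  split; apply pack_inj; unfold cofree_coaction; arrow_simpl.
  - rewrite <- (Atens_id HD C X), <- (Atens_assoc HD Dl (I C) (I X)).
    rewrite <- (Atens_compl HD) by solve_ob. rewrite Delta_coassoc, (Atens_compl HD) by solve_ob.
    rewrite (Atens_assoc HD). reflexivity.
  - rewrite <- (Atens_id HD C X), <- (Atens_assoc HD Ep (I C) (I X)).
    rewrite <- (Atens_compl HD) by solve_ob. rewrite Delta_counitl. arrow_simpl. reflexivity.
Qed.

Lemma sigma_cofree X :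
  Acomp (Atens Ep (I (X ⊗ C))) (Acomp (S (C ⊗ X)) (Atens Dl (I X))) = S X.
Proof.
  rewrite sigma_tens. nest_right.
  rewrite (Acomp_assoc HD _ (Atens (I C) (S X)) (Atens Ep (I (X ⊗ C)))) by solve_ob.
  rewrite <- (Atens_comp HD) by solve_ob. arrow_simpl.
  rewrite (Atens_split_rl HD Ep (S X)). simpl_ends.
  rewrite (Atens_unitl HD). nest_right.
  rewrite <- (Atens_compl HD) by solve_ob. rewrite Delta_cocomm.
  rewrite <- (Atens_id HD C X), <- (Atens_assoc HD Ep (I C) (I X)).
  rewrite <- (Atens_compl HD) by solve_ob. rewrite Delta_counitl. arrow_simpl. reflexivity.
Qed.

Lemma induced_half_braiding : induced_half_braiding_is HD C Delta eps sigma.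
Proof.
  intros X E1 E2 e1 e2 He1 He2. cbv zeta.
  destruct (cotensor_cofree_iso C Delta comodule_regular X E1 e1 He1) as [g [Hg [Hg1 Hg2]]].
  destruct (cotensor_unit_r_iso _ _ (comodule_cofree X) E2 e2 He2) as [h [Hh [Hh1 Hh2]]].
  exists g, h. do 4 (split; [assumption|]).
  assert (HVg : cast (tens_unitl D HD (C ⊗ X)) ∘ (eps ⊗m idm (C ⊗ X)) ∘ e1 ∘ g
                = idm (C ⊗ X)).
  { rewrite <- (comp_assoc D HD), Hg. apply pack_inj. arrow_simpl. rewrite Delta_cocomm.
    rewrite <- (Atens_id HD C X), <- (Atens_assoc HD Ep (I C) (I X)).
    rewrite <- (Atens_compl HD) by solve_ob. rewrite Delta_counitl. arrow_simpl. reflexivity. }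
  rewrite <- (comp_assoc D HD), HVg, (comp_idr D HD).
  unfold hopfR, adj_counit. rewrite <- (comp_assoc D HD), Hh.
  apply pack_inj. unfold cofree_coaction. arrow_simpl.
  rewrite (Atens_assoc HD Ep), (Atens_id HD X C). apply sigma_cofree.
Qed.

Section InverseHalfBraiding.
Variables (X : ob D) (t : hom (X ⊗ C) (C ⊗ X)).
Hypotheses (Ht1 : t ∘ sigma X = idm (C ⊗ X)) (Ht2 : sigma X ∘ t = idm (X ⊗ C)).

Let t_sigma : Acomp (pack t) (S X) = I (C ⊗ X).
Proof. rewrite <- (pack_comp HD), Ht1. reflexivity. Qed.

Let sigma_t : Acomp (S X) (pack t) = I (X ⊗ C).
Proof. rewrite <- (pack_comp HD), Ht2. reflexivity. Qed.

Lemma sigma_inv_counit : Acomp (Atens Ep (I X)) (pack t) = Atens (I X) Ep.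
Proof.
  rewrite <- eps_central. rewrite <- (Acomp_assoc HD) by solve_ob.
  rewrite sigma_t. arrow_simpl. reflexivity.
Qed.

Lemma sigma_inv_cofree_coaction :
  Acomp (Acomp (S (C ⊗ X)) (Atens Dl (I X))) (pack t)
  = Acomp (Atens (pack t) (I C)) (Atens (I X) Dl).
Proof.
  rewrite <- (Acomp_idr HD (X ⊗ C) (Acomp (Atens (pack t) (I C)) (Atens (I X) Dl)))
    by solve_ob.
  rewrite <- sigma_t. nest_right.
  rewrite (Acomp_assoc HD (pack t) (S X) (Atens (I X) Dl)) by solve_ob.
  rewrite <- Delta_central. nest_right.
  rewrite (Acomp_assoc HD _ (Atens (S X) (I C)) (Atens (pack t) (I C))) by solve_ob.
  rewrite <- (Atens_compl HD) by solve_ob. rewrite t_sigma. arrow_simpl.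
  rewrite sigma_tens. nest_right.
  rewrite (Acomp_assoc HD (pack t) (Atens Dl (I X)) (Atens (S C) (I X))) by solve_ob.
  rewrite <- (Atens_compl HD) by solve_ob. rewrite Delta_cocomm. reflexivity.
Qed.

Lemma cotensor_cofree_right_iso M (d : hom M (C ⊗ M)) E (e : hom E ((C ⊗ X) ⊗ M)) :
  is_comodule HD C Delta eps M d ->
  is_equalizer (cot1 HD C sigma (C ⊗ X) (cofree_coaction HD C Delta X) M)
               (cot2 C (C ⊗ X) M d) e ->
  is_iso (hopfR HD C eps e).
Proof.
  intros Hd He. unfold hopfR.
  apply (equalizer_retract_is_iso HD _ _ e
           ((t ⊗m idm M) ∘ cast (eq_sym (tens_assoc D HD X C M)) ∘ (idm X ⊗m d)) _ He).
  - apply pack_inj. unfold cot1, cot2, cofree_coaction. arrow_simpl.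
    rewrite (Acomp_assoc HD _ (Atens (pack t) (I M))) by solve_ob.
    rewrite <- (Atens_compl HD) by solve_ob.
    rewrite sigma_inv_cofree_coaction, (Atens_compl HD) by solve_ob. nest_right.
    rewrite (Atens_assoc HD (I X) Dl (I M)), <- (Atens_compr HD) by solve_ob.
    rewrite (coaction_coassoc _ _ Hd).
    rewrite (Acomp_assoc HD _ (Atens (pack t) (I M)) (Atens (I (C ⊗ X)) (pack d)))
      by solve_ob.
    rewrite <- (Atens_comp HD (pack t) (I (C ⊗ X)) (I M) (pack d)) by solve_ob.
    arrow_simpl.
    rewrite (Atens_split_lr HD (pack t) (pack d)). simpl_ends.
    rewrite <- (Atens_id HD X C), (Atens_assoc HD (I X) (I C) (pack d)). nest_right.
    rewrite <- (Atens_compr HD) by solve_ob.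
    rewrite (Atens_assoc HD (pack t) (I C) (I M)), (Atens_id HD C M). reflexivity.
  - apply pack_inj. unfold adj_counit. arrow_simpl.
    rewrite (Acomp_assoc HD _ (Atens (pack t) (I M))) by solve_ob.
    rewrite <- (Atens_compl HD) by solve_ob.
    rewrite sigma_inv_counit, (Atens_assoc HD).
    rewrite <- (Atens_compr HD) by solve_ob. rewrite (coaction_counit _ _ Hd).
    arrow_simpl. reflexivity.
  - destruct He as [Heq _].
    assert (H1 := f_equal pack Heq). revert H1.
    unfold cot1, cot2, cofree_coaction. arrow_simpl. intro H1.
    apply pack_inj. unfold adj_counit. arrow_simpl.
    rewrite (Acomp_assoc HD _ (Atens (Atens Ep (I X)) (I M)) (Atens (I X) (pack d)))
      by solve_ob.
    rewrite <- (Atens_comp HD) by solve_ob. arrow_simpl.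
    rewrite (Atens_split_lr HD (Atens Ep (I X)) (pack d)).
    simpl_ends. nest_right.
    rewrite <- H1.
    rewrite <- (Atens_id HD C M), <- (Atens_assoc HD (Atens Ep (I X)) (I C) (I M)).
    rewrite (Atens_assoc HD Ep (I X) (I C)), (Atens_id HD X C).
    rewrite (Acomp_assoc HD (pack e)) by solve_ob. rewrite <- (Atens_compl HD) by solve_ob.
    rewrite sigma_cofree.
    rewrite (Acomp_assoc HD (pack e)) by solve_ob. rewrite <- (Atens_compl HD) by solve_ob.
    rewrite t_sigma. arrow_simpl. reflexivity.
Qed.

End InverseHalfBraiding.

End LaxCentralCoalgebra.

Theorem mainTheorem16 (D : MonData) (HD : isStrictMon D) (C : ob D)
    (Delta : hom C (C ⊗ C)) (eps : hom C unit)
    (sigma : forall X : ob D, hom (C ⊗ X) (X ⊗ C)) :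
  is_lax_central_coalgebra HD C Delta eps sigma ->
  is_cocommutative C Delta sigma ->
  cotensorable HD C Delta eps sigma ->
  VR_left_hopf HD C Delta eps sigma /\
  induced_comultiplication_is HD C Delta eps sigma /\
  induced_half_braiding_is HD C Delta eps sigma /\
  ((forall X : ob D, is_iso (sigma X)) -> VR_hopf HD C Delta eps sigma).
Proof.
  (* Cotensorability only provides the equalizers; the conclusions are about
     any given equalizer. *)
  intros Hlcc Hcocomm _.
  assert (Hleft : VR_left_hopf HD C Delta eps sigma).
  { intros M d Hd X E e He.
    destruct (cotensor_cofree_iso HD C Delta eps sigma Hlcc Hcocomm M d Hd X E e He)
      as [u [_ Hu]].
    exists u. exact Hu. }
  split; [exact Hleft|split; [|split]].
  - intros E0 e0 He0.
    destruct (cotensor_unit_l_iso HD C Delta eps sigma Hlcc Hcocomm C Delta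
                (comodule_regular HD C Delta eps sigma Hlcc) E0 e0 He0) as [k [Hk Hiso]].
    exists k. tauto.
  - exact (induced_half_braiding HD C Delta eps sigma Hlcc Hcocomm).
  - intros Hinv. split; [exact Hleft|].
    intros M d Hd X E e He. destruct (Hinv X) as [t [Ht1 Ht2]].
    exact (cotensor_cofree_right_iso HD C Delta eps sigma Hlcc Hcocomm X t Ht1 Ht2 M d E e Hd He).
Qed.
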